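(* Let $\mathcal K$ be a simplicial complex on $[m]$ and let $\{a_J:J\subseteq[m]\}$ be elements of an abelian group such that whenever $A,B\subseteq[m]$ satisfy $\mathcal K_{A\cup B}=\mathcal K_A\cup\mathcal K_B$, we have $a_{A\cup B}=a_A+a_B-a_{A\cap B}$. Then for every $J\subseteq[m]$, $$a_J=\sum_{B\in\mathcal K^f_J}(-1)^{|B|}\sum_{I\subseteq B}(-1)^{|I|}a_I=\sum_{I\in\mathcal K^f_J}\bigl(1-\chi(\operatorname{lk}_{\mathcal K^f_J}I)\bigr)a_I.$$
   Context: $\mathcal K_I=\{\sigma\in\mathcal K:\sigma\subseteq I\}$. $\mathcal K^f$ is the flag complex on the 1-skeleton of $\mathcal K$ (faces: subsets $I\subseteq[m]$ all of whose subsets of size $\le2$ lie in $\mathcal K$), and $\mathcal K^f_J=(\mathcal K^f)_J$; sums include the empty face. $\operatorname{lk}_{\mathcal L}I=\{J\in\mathcal L:J\cap I=\varnothing,\ J\cup I\in\mathcal L\}$ and $\chi(\mathcal L)=\sum_{\varnothing\ne A\in\mathcal L}(-1)^{|A|-1}$. *)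

From mathcomp Require Import all_boot all_order all_algebra.
Set Implicit Arguments. Unset Strict Implicit. Unset Printing Implicit Defensive.
Import GRing.Theory Num.Theory.
Local Open Scope ring_scope.

Definition simplicial_complex (m : nat) (K : {set {set 'I_m}}) : Prop :=
  [/\ set0 \in K,
      (forall s t : {set 'I_m}, t \subset s -> s \in K -> t \in K)
    & (forall i : 'I_m, [set i] \in K)].

Definition restr (m : nat) (K : {set {set 'I_m}}) (I : {set 'I_m}) :
  {set {set 'I_m}} := [set s in K | s \subset I].

Definition flagc (m : nat) (K : {set {set 'I_m}}) : {set {set 'I_m}} :=
  [set I : {set 'I_m} |
     [forall s : {set 'I_m}, ((s \subset I) && (#|s| <= 2)%N) ==> (s \in K)]].

Definition link (m : nat) (L : {set {set 'I_m}}) (I : {set 'I_m}) :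
  {set {set 'I_m}} := [set J in L | (J :&: I == set0) && (J :|: I \in L)].

Definition euler (m : nat) (L : {set {set 'I_m}}) : int :=
  \sum_(A in L | A != set0) (-1) ^+ (#|A|.-1).

From mathcomp Require Import all_boot all_order all_algebra.
Set Implicit Arguments. Unset Strict Implicit. Unset Printing Implicit Defensive.
Import GRing.Theory.
Local Open Scope ring_scope.

(* Moebius inversion on the Boolean lattice gives
   a_J = sum_(B <= J) (-1)^|B| sum_(I <= B) (-1)^|I| a_I.  If B is not a flag
   face it contains a non-edge {i, j}; for I <= B - {i, j} the full subcomplex
   on I + i + j is then the union of those on I + i and I + j, so additivity
   makes the inner sum cancel in blocks of four.  Exchanging the two sums over
   the flag faces that remain, the coefficient of a_I is an alternating sum over
   the cofaces of I, which the map B |-> B - I turns into 1 - chi of the link. *)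

Section AlternatingSums.

Variables (m : nat) (G : zmodType).
Implicit Types (a F : {set 'I_m} -> G) (x : 'I_m) (B I J : {set 'I_m}).

Lemma sum_subsetsD1 F B x : x \in B ->
  \sum_(I : {set 'I_m} | I \subset B) F I
    = \sum_(I : {set 'I_m} | I \subset B :\ x) (F I + F (x |: I)).
Proof.
move=> xB; rewrite big_split /= (bigID (fun I : {set 'I_m} => x \in I)) /= addrC.
congr (_ + _); first by apply: eq_bigl => I; rewrite subsetD1 andbC.
rewrite (reindex_onto (fun I : {set 'I_m} => x |: I) (fun I => I :\ x)) /=; last first.
  by move=> I /andP[_ xI]; rewrite setD1K.
apply: eq_bigl => I; rewrite setU11 andbT subsetD1 subUset sub1set xB /=.
have [xI | nxI] := boolP (x \in I); last by rewrite setU1K ?eqxx.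
by rewrite andbF; apply/negbTE; apply: contraL xI => /andP[_ /eqP <-]; rewrite setD11.
Qed.

Lemma sign_setU1 x I : x \notin I -> (-1) ^+ #|x |: I| = - (-1) ^+ #|I| :> int.
Proof. by move=> xI; rewrite cardsU1 xI exprS mulN1r. Qed.

Definition alt_sum a B := \sum_(I : {set 'I_m} | I \subset B) a I *~ (-1) ^+ #|I|.

Lemma alt_sum_setU1 a x B : x \notin B ->
  alt_sum a (x |: B) = alt_sum a B - alt_sum (fun I => a (x |: I)) B.
Proof.
move=> xB; rewrite /alt_sum (sum_subsetsD1 _ (setU11 x B)) setU1K // big_split.
rewrite -sumrN; congr (_ + _); apply: eq_bigr => I IB /=.
have xI : x \notin I by apply: contra xB; apply: subsetP.
by rewrite sign_setU1 // mulrNz.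
Qed.

Lemma alt_sum_inversion a J :
  a J = \sum_(B : {set 'I_m} | B \subset J) alt_sum a B *~ (-1) ^+ #|B|.
Proof.
elim: {J}_.+1 {-2}J (ltnSn #|J|) a => // n IHn J ltJn a.
have [-> | [x xJ]] := set_0Vmem J.
  rewrite (big_pred1 set0) => [|B]; last by rewrite subset0.
  by rewrite /alt_sum (big_pred1 set0) => [|I]; rewrite ?subset0 ?cards0.
have cardJx : (#|J :\ x| < n)%N by move: ltJn; rewrite (cardsD1 x J) xJ.
rewrite (sum_subsetsD1 _ xJ) -{1}(setD1K xJ) (IHn _ cardJx (fun I => a (x |: I))).
apply: eq_bigr => B BJx.
have xB : x \notin B by apply/negP => /(subsetP BJx); rewrite setD11.
by rewrite alt_sum_setU1 // sign_setU1 // mulrNz mulrzBl opprB addrC subrK.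
Qed.

End AlternatingSums.

Definition down_closed (m : nat) (L : {set {set 'I_m}}) : Prop :=
  forall s t : {set 'I_m}, t \subset s -> s \in L -> t \in L.

Lemma flagc_down_closed (m : nat) (K : {set {set 'I_m}}) : down_closed (flagc K).
Proof.
move=> s t ts; rewrite !inE => /forallP flag_s; apply/forallP => u.
by apply/implyP => /andP[ut u2]; rewrite (implyP (flag_s u)) // (subset_trans ut ts).
Qed.

Lemma restr_down_closed (m : nat) (L : {set {set 'I_m}}) (J : {set 'I_m}) :
  down_closed L -> down_closed (restr L J).
Proof.
move=> L_down s t ts; rewrite !inE => /andP[sL sJ].
by rewrite (L_down s) // (subset_trans ts sJ).
Qed.

Lemma flagc_nonedge (m : nat) (K : {set {set 'I_m}}) (B : {set 'I_m}) :
  set0 \in K -> (forall i, [set i] \in K) -> B \notin flagc K ->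
  exists i j, [/\ i != j, [set i; j] \notin K, i \in B & j \in B].
Proof.
move=> K0 K1; rewrite inE negb_forall => /existsP[s].
rewrite negb_imply => /andP[/andP[sB s_le2] sK].
have : [|| #|s| == 0, #|s| == 1 | #|s| == 2]%N.
  by move: s_le2; case: #|s| => [|[|[|]]].
case/or3P => [/eqP/cards0_eq s0 | /cards1P[i s1] | /cards2P[i [j [ij s2]]]].
- by rewrite s0 K0 in sK.
- by rewrite s1 K1 in sK.
exists i, j; rewrite -s2; split=> //; apply: (subsetP sB); by rewrite s2 !inE eqxx ?orbT.
Qed.

Lemma restr_setU1_nonedge (m : nat) (K : {set {set 'I_m}}) (i j : 'I_m)
    (I : {set 'I_m}) :
  down_closed K -> [set i; j] \notin K ->
  restr K ((i |: I) :|: (j |: I)) = restr K (i |: I) :|: restr K (j |: I).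
Proof.
move=> K_down ijK; apply/setP => s; rewrite !inE.
apply/andP/orP => [[sK sUij] | sX]; last first.
  by case: sX => /andP[sK sX]; split=> //; apply: subset_trans sX _;
    rewrite ?subsetUl ?subsetUr.
have drop_missing u v : v \notin s -> s \subset (u |: I) :|: (v |: I) -> s \subset u |: I.
  move=> vs /subsetP sUuv; apply/subsetP => y ys; move: (sUuv y ys); rewrite !inE.
  have [yv | _] := eqVneq y v; first by rewrite -yv ys in vs.
  by case/orP => //= ->; rewrite orbT.
have [i_s | ?] := boolP (i \in s); last first.
  by right; rewrite sK (drop_missing _ i) // setUC.
have [j_s | ?] := boolP (j \in s); last by left; rewrite sK (drop_missing _ j).
case/negP: ijK; apply: K_down sK; apply/subsetP => y; rewrite !inE.
by case/orP => /eqP ->.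
Qed.

Lemma sum_sign_cofaces (m : nat) (L : {set {set 'I_m}}) (I : {set 'I_m}) :
  down_closed L -> I \in L ->
  \sum_(B in L | I \subset B) (-1) ^+ #|I| * (-1) ^+ #|B| = 1 - euler (link L I).
Proof.
move=> L_down IL; rewrite -mulr_sumr.
rewrite (reindex_onto (fun C : {set 'I_m} => C :|: I) (fun B => B :\: I)) /=; last first.
  by move=> B /andP[_ IB]; rewrite setUC -{1}(setIidPr IB) setID.
rewrite (eq_bigl [in link L I]) => [|C]; last first.
  rewrite !inE subsetUr andbT setDUl setDv setU0 setI_eq0.
  apply/idP/idP => [/andP[CIL /eqP/setDidPl CI] | /and3P[_ CI CIL]].
    by rewrite CI CIL (L_down _ _ (subsetUl C I) CIL).
  by rewrite CIL; apply/eqP/setDidPl.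
under eq_bigr => C.
  rewrite inE => /and3P[_ /eqP CI _]; rewrite cardsU CI cards0 subn0 exprD.
  over.
rewrite -mulr_suml mulrCA -exprMn mulN1r opprK expr1n mulr1.
rewrite (bigD1 set0) /=; last first.
  by rewrite !inE set0I eqxx set0U IL (L_down I set0) ?sub0set.
rewrite cards0 expr0 -sumrN; congr (_ + _); apply: eq_bigr => C /andP[_ C0].
by rewrite -(prednK (_ : 0 < #|C|)%N) ?card_gt0 // exprS mulN1r.
Qed.

Lemma sum_alt_sum_euler (m : nat) (G : zmodType) (a : {set 'I_m} -> G)
    (L : {set {set 'I_m}}) :
  down_closed L ->
  \sum_(B in L) alt_sum a B *~ (-1) ^+ #|B|
    = \sum_(I in L) a I *~ (1 - euler (link L I)).
Proof.
move=> L_down; under eq_bigr => B _ do rewrite /alt_sum mulrz_suml.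
rewrite (exchange_big_dep [in L]) => [|B I BL IB]; last exact: L_down IB BL.
apply: eq_bigr => I IL; rewrite -sum_sign_cofaces // mulrz_sumr.
by apply: eq_bigr => B _; rewrite mulrzA.
Qed.

Section NonEdgeVanishing.

Variables (m : nat) (K : {set {set 'I_m}}) (G : zmodType) (a : {set 'I_m} -> G).
Hypothesis K_down : down_closed K.
Hypothesis a_additive : forall A B : {set 'I_m},
  restr K (A :|: B) = restr K A :|: restr K B -> a (A :|: B) = a A + a B - a (A :&: B).

Lemma alt_sum_nonedge (i j : 'I_m) (B : {set 'I_m}) :
  i != j -> [set i; j] \notin K -> i \in B -> j \in B -> alt_sum a B = 0.
Proof.
move=> ij ijK iB jB.
have jBi : j \in B :\ i by rewrite !inE eq_sym ij.
rewrite /alt_sum (sum_subsetsD1 _ iB) (sum_subsetsD1 _ jBi) big1 // => I IBij.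
have iI : i \notin I by apply/negP => /(subsetP IBij); rewrite !inE eqxx andbF.
have jI : j \notin I by apply/negP => /(subsetP IBij); rewrite setD11.
have ijI : i \notin j |: I by rewrite !inE negb_or ij.
have a_ijI : a (i |: (j |: I)) = a (i |: I) + a (j |: I) - a I.
  have := a_additive (restr_setU1_nonedge I K_down ijK).
  rewrite -setUA (setUidPr (subsetU1 _ _)) -setUIl => ->; congr (_ - a _).
  apply/setUidPr/subsetP => y; rewrite !inE => /andP[/eqP-> /eqP ij_eq].
  by rewrite ij_eq eqxx in ij.
rewrite a_ijI (sign_setU1 ijI) !sign_setU1 // opprK !mulrNz mulrzBl mulrzDl.
by rewrite (addrC (a (i |: I) *~ _)) !addrA !addrNK subrr.
Qed.

Lemma alt_sum_inversion_flagc (J : {set 'I_m}) :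
  set0 \in K -> (forall i, [set i] \in K) ->
  a J = \sum_(B in restr (flagc K) J) alt_sum a B *~ (-1) ^+ #|B|.
Proof.
move=> K0 K1; rewrite (alt_sum_inversion a J) (bigID [in flagc K]) /=.
rewrite [X in _ + X]big1 ?addr0 => [|B /andP[_ /(flagc_nonedge K0 K1)]].
  by apply: eq_bigl => B; rewrite /restr [in RHS]inE andbC.
by case=> i [j [ij ijK iB jB]]; rewrite (alt_sum_nonedge ij ijK iB jB) mul0rz.
Qed.

End NonEdgeVanishing.

Theorem mainTheorem4 (m : nat) (K : {set {set 'I_m}}) (G : zmodType)
  (a : {set 'I_m} -> G) :
  simplicial_complex K ->
  (forall A B : {set 'I_m},
     restr K (A :|: B) = restr K A :|: restr K B ->
     a (A :|: B) = a A + a B - a (A :&: B)) ->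
  forall J : {set 'I_m},
    a J = \sum_(B in restr (flagc K) J)
            (\sum_(I : {set 'I_m} | I \subset B) a I *~ ((-1) ^+ #|I|))
              *~ ((-1) ^+ #|B|)
    /\ a J = \sum_(I in restr (flagc K) J)
               a I *~ (1 - euler (link (restr (flagc K) J) I)).
Proof.
move=> [K0 K_down K1] a_additive J.
have a_flag := alt_sum_inversion_flagc K_down a_additive J K0 K1.
split=> //; rewrite a_flag sum_alt_sum_euler //.
exact/restr_down_closed/flagc_down_closed.
Qed.
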